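(* Let $\mu \in \mathbb{N}$ and let $J_2 = \begin{bmatrix} 0 & 1 \\ 0 & 0 \end{bmatrix}$. Then $J_2^{(\mu)} = J_2 \oplus \cdots \oplus J_2$ ($\mu$ summands) acting on $\mathbb{C}^{2\mu}$ can be written as $MN - NM$ with $M, N \in \mathcal{B}(\mathbb{C}^{2\mu})$, $M^2 = 0 = N^2$, if and only if $\mu$ is even. *)

From HB Require Import structures.
From mathcomp Require Import all_boot all_order all_algebra.
From mathcomp Require Import complex.
From mathcomp Require Import Rstruct.
From Stdlib Require Import Reals.
Set Implicit Arguments. Unset Strict Implicit. Unset Printing Implicit Defensive.
Import GRing.Theory Num.Theory.
Local Open Scope ring_scope.

Definition CC : Type := complex Rdefinitions.R.

(* J_2^{(mu)} = J_2 ⊕ ... ⊕ J_2 (mu summands), J_2 = [[0,1],[0,0]], as a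
   2mu x 2mu matrix w.r.t. the standard basis e_0,...,e_{2mu-1}, the k-th
   summand acting on span(e_{2k}, e_{2k+1}): its only nonzero entries are
   (2k, 2k+1) = 1. *)
Definition J2mu (mu : nat) : 'M[CC]_(2 * mu) :=
  \matrix_(i, j) (if ~~ odd i && (j == i.+1 :> nat) then 1 else 0).

(** Conjugating by the permutation that interleaves the two halves of the
    standard basis turns [J2mu mu] into the block matrix [[0, 1], [0, 0]] of
    size [mu + mu].  If [J = M N - N M] with [M ^ 2 = N ^ 2 = 0], then [M] and
    [N] anticommute with [J], which forces [M = [[a, X], [0, -a]]] and
    [N = [[b, Y], [0, -b]]] with [a ^ 2 = b ^ 2 = 0], [a b = b a], [b Y = Y b]
    and [a Y + Y a - (b X + X b) = 1].  Then [a] induces a square-zero map on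
    [H = ker b / im b], and the last identity shows that its kernel equals its
    image; hence [dim H] is even, and so is [mu = 2 rank b + dim H].
    Conversely, for [mu = k + k] the blocks [a = [[0, 1], [0, 0]]],
    [Y = a^T], [b = X = 0] give such a decomposition. *)
From HB Require Import structures.
From mathcomp Require Import all_boot all_order all_algebra.
From mathcomp Require Import complex Rstruct.
From mathcomp Require Import zify.
Set Implicit Arguments. Unset Strict Implicit. Unset Printing Implicit Defensive.
Import GRing.Theory.
Local Open Scope ring_scope.

Lemma sub_kermx_cokermx (F : fieldType) m n p (u : 'M[F]_(m, n)) (B : 'M_(p, n)) :
  (u <= kermx (cokermx B))%MS = (u <= B)%MS.
Proof. by apply/sub_kermxP/idP; rewrite submxE => /eqP. Qed.

Section Homology.
Variables (F : fieldType) (n : nat).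
Implicit Types a b X Y : 'M[F]_n.

(* Row-vector convention.  When [b ^ 2 = 0] and [a b = b a], these are the
   preimages in [ker b] of the kernel and of the image of the map induced by
   [a] on [ker b / im b]. *)
Definition homology_kermx a b := (kermx b :&: kermx (a *m cokermx b))%MS.
Definition homology_imgmx a b := (kermx b *m a + b)%MS.

Lemma even_of_homology_exact a b :
  (homology_kermx a b == homology_imgmx a b)%MS -> ~~ odd n.
Proof.
move=> /eqmx_rank exact_ab.
have rank_cycles := mxrank_mul_ker (kermx b) (a *m cokermx b).
have rank_img := mxrank_mul_ker (homology_imgmx a b) (cokermx b).
rewrite addsmxMr mulmx_coker addsmx0 -mulmxA in rank_img.
have /eqmx_rank img_cap_b : (homology_imgmx a b :&: kermx (cokermx b) == b)%MS.
  apply/andP; split; first by rewrite -sub_kermx_cokermx capmxSr.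
  by rewrite sub_capmx sub_kermx_cokermx addsmxSr submx_refl.
rewrite img_cap_b in rank_img.
rewrite mxrank_ker -/(homology_kermx a b) exact_ab -rank_img in rank_cycles.
have rank_b_le := rank_leq_row b.
have -> : n = (\rank (kermx b *m (a *m cokermx b)) + \rank b).*2 by lia.
by rewrite odd_double.
Qed.

Lemma homology_imgmx_sub_kermx a b :
  a *m a = 0 -> b *m b = 0 -> a *m b = b *m a ->
  (homology_imgmx a b <= homology_kermx a b)%MS.
Proof.
move=> aa0 bb0 ab_ba; rewrite addsmx_sub !sub_capmx -andbA.
apply/and4P; split; apply/sub_kermxP => //.
- by rewrite -mulmxA ab_ba mulmxA mulmx_ker mul0mx.
- by rewrite mulmxA -(mulmxA _ a a) aa0 mulmx0 mul0mx.
- by rewrite mulmxA -ab_ba -mulmxA mulmx_coker mulmx0.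
Qed.

Lemma homology_kermx_sub_imgmx a b X Y :
  b *m Y = Y *m b -> a *m Y + Y *m a - (b *m X + X *m b) = 1%:M ->
  (homology_kermx a b <= homology_imgmx a b)%MS.
Proof.
move=> bY_Yb htpy; set Z := homology_kermx a b.
have Zb0 : Z *m b = 0 by apply/sub_kermxP; apply: capmxSl.
have Za_sub_b : (Z *m a <= b)%MS.
  by rewrite submxE -mulmxA; apply/eqP/sub_kermxP; apply: capmxSr.
have b_sub_img : (b <= homology_imgmx a b)%MS by apply: addsmxSr.
rewrite -[Z]mulmx1 -htpy !(mulmxDr, mulmxN) opprD !mulmxA Zb0 mul0mx oppr0 sub0r.
apply: addmx_sub; [apply: addmx_sub | rewrite eqmx_opp].
- apply: submx_trans b_sub_img; apply: submx_trans (submxMr Y Za_sub_b) _.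
  by rewrite bY_Yb submxMl.
- apply: submx_trans (addsmxSl _ _); apply: submxMr.
  by apply/sub_kermxP; rewrite -mulmxA -bY_Yb mulmxA Zb0 mul0mx.
- by apply: submx_trans b_sub_img; apply: submxMl.
Qed.

Lemma even_of_sqr0_homotopy a b X Y :
  a *m a = 0 -> b *m b = 0 -> a *m b = b *m a -> b *m Y = Y *m b ->
  a *m Y + Y *m a - (b *m X + X *m b) = 1%:M -> ~~ odd n.
Proof.
move=> aa0 bb0 ab_ba bY_Yb htpy; apply: (@even_of_homology_exact a b).
by rewrite homology_imgmx_sub_kermx ?(homology_kermx_sub_imgmx bY_Yb htpy).
Qed.
End Homology.

Definition sqr0_commutator (R : pzRingType) m (J : 'M[R]_m) :=
  exists M N : 'M_m, M *m M = 0 /\ N *m N = 0 /\ J = M *m N - N *m M.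

Lemma sqr0_anticommute_commutator (R : pzRingType) m (M N : 'M[R]_m) :
  M *m M = 0 -> M *m (M *m N - N *m M) + (M *m N - N *m M) *m M = 0.
Proof.
move=> MM0; rewrite mulmxBr mulmxBl !mulmxA MM0 mul0mx -(mulmxA N M M) MM0.
by rewrite mulmx0 sub0r subr0 addNr.
Qed.

Section BlockJ2.
Variables (R : pzRingType) (n : nat).
Implicit Types a b X Y : 'M[R]_n.

Definition block_J2 : 'M[R]_(n + n) := block_mx 0 1%:M 0 0.

Lemma anticommute_block_J2 a X c d :
  block_mx a X c d *m block_J2 + block_J2 *m block_mx a X c d = 0 ->
  block_mx a X c d = block_mx a X 0 (- a).
Proof.
rewrite /block_J2 !mulmx_block !(mulmx0, mul0mx, mulmx1, mul1mx, addr0, add0r).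
rewrite add_block_mx -block_mx0 => /eq_block_mx[c0 /addr0_eq d_opp _ _].
by rewrite add0r in c0; rewrite c0 -d_opp.
Qed.

Lemma mulmx_block_triu_opp a X b Y :
  block_mx a X 0 (- a) *m block_mx b Y 0 (- b) =
  block_mx (a *m b) (a *m Y - X *m b) 0 (a *m b).
Proof.
by rewrite mulmx_block !(mulmx0, mul0mx, addr0, add0r) mulmxN mulNmx mulmxN opprK.
Qed.

Lemma commutator_block_triu_opp a X b Y :
  let M := block_mx a X 0 (- a) in let N := block_mx b Y 0 (- b) in
  M *m N - N *m M = block_mx (a *m b - b *m a)
    (a *m Y + Y *m a - (b *m X + X *m b)) 0 (a *m b - b *m a).
Proof.
rewrite /= !mulmx_block_triu_opp opp_block_mx add_block_mx oppr0 addr0.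
by rewrite opprB addrACA -opprD (addrC (X *m b)).
Qed.

Lemma sqr0_commutator_block_J2 :
  sqr0_commutator block_J2 ->
  exists a b X Y : 'M[R]_n, [/\ a *m a = 0, b *m b = 0, a *m b = b *m a,
    b *m Y = Y *m b & a *m Y + Y *m a - (b *m X + X *m b) = 1%:M].
Proof.
move=> [M [N [MM0 [NN0 J_comm]]]].
have MJ := sqr0_anticommute_commutator N MM0.
have NJ := sqr0_anticommute_commutator M NN0.
rewrite -J_comm in MJ; rewrite -opprB -J_comm mulmxN mulNmx -opprD in NJ.
move/eqP: NJ; rewrite oppr_eq0 => /eqP NJ.
move: MJ NJ MM0 NN0 J_comm; rewrite -[M]submxK -[N]submxK.
move: (ulsubmx M) (ursubmx M) (dlsubmx M) (drsubmx M) => a X c d.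
move: (ulsubmx N) (ursubmx N) (dlsubmx N) (drsubmx N) => b Y c' d'.
move=> /anticommute_block_J2 -> /anticommute_block_J2 ->.
rewrite commutator_block_triu_opp !mulmx_block_triu_opp -!block_mx0 /block_J2.
move=> /eq_block_mx[aa0 _ _ _] /eq_block_mx[bb0 /subr0_eq bY _ _].
by move=> /eq_block_mx[/esym/subr0_eq ab /esym htpy _ _]; exists a, b, X, Y.
Qed.

Lemma sqr0_commutator_block_J2_of a Y :
  a *m a = 0 -> a *m Y + Y *m a = 1%:M -> sqr0_commutator block_J2.
Proof.
move=> aa0 aY_Ya; exists (block_mx a 0 0 (- a)), (block_mx 0 Y 0 (- 0)).
rewrite commutator_block_triu_opp !mulmx_block_triu_opp aa0.
by rewrite !(mulmx0, mul0mx, subrr, addr0, oppr0) aY_Ya block_mx0.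
Qed.

Lemma block_J2_sqr : block_J2 *m block_J2 = 0.
Proof.
by rewrite /block_J2 mulmx_block !(mulmx0, mul0mx, mulmx1, addr0) block_mx0.
Qed.

Lemma block_J2_anticommute_tr : block_J2 *m block_J2^T + block_J2^T *m block_J2 = 1%:M.
Proof.
rewrite /block_J2 tr_block_mx !trmx0 trmx1 !mulmx_block.
rewrite !(mulmx0, mul0mx, mulmx1, addr0, add0r) add_block_mx !(addr0, add0r).
by rewrite -scalar_mx_block.
Qed.
End BlockJ2.

Lemma mxsub_mul_bij (R : pzRingType) m n (f : 'I_m -> 'I_n) (A B : 'M[R]_n) :
  bijective f -> mxsub f f (A *m B) = mxsub f f A *m mxsub f f B.
Proof.
move=> f_bij; apply/matrixP => i j; rewrite !mxE.
under [RHS]eq_bigr do rewrite !mxE.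
by rewrite (reindex f) //; apply: onW_bij.
Qed.

Lemma sqr0_commutator_mxsub (R : pzRingType) m n (f : 'I_m -> 'I_n) (J : 'M[R]_n) :
  bijective f -> sqr0_commutator (mxsub f f J) <-> sqr0_commutator J.
Proof.
have transport m' n' (h : 'I_m' -> 'I_n') (K : 'M[R]_n') : bijective h ->
    sqr0_commutator K -> sqr0_commutator (mxsub h h K).
  move=> h_bij [M [N [MM0 [NN0 ->]]]]; exists (mxsub h h M), (mxsub h h N).
  by rewrite -!mxsub_mul_bij // MM0 NN0 linearB linear0.
move=> f_bij; split; last exact: transport.
have [g fK gK] := f_bij; have g_bij : bijective g by exists f.
by move=> /(transport _ _ _ _ g_bij); rewrite -mxsub_comp mxsub_eq_id.
Qed.

Section Interleave.
Variable mu : nat.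

Lemma interleave_subproof (i : 'I_(mu + mu)) :
  ((if (i < mu)%N then i.*2 else (i - mu).*2.+1) < 2 * mu)%N.
Proof. by have := ltn_ord i; case: (ltnP i mu); lia. Qed.

Definition interleave (i : 'I_(mu + mu)) : 'I_(2 * mu) :=
  Ordinal (interleave_subproof i).

Lemma interleave_lshift (k : 'I_mu) : interleave (lshift mu k) = k.*2 :> nat.
Proof. by rewrite /= ltn_ord. Qed.

Lemma interleave_rshift (k : 'I_mu) : interleave (rshift mu k) = k.*2.+1 :> nat.
Proof. by rewrite /= ltnNge leq_addr addKn. Qed.

Lemma interleave_bij : bijective interleave.
Proof.
apply: inj_card_bij; last by rewrite !card_ord addnn mul2n.
move=> i j /(congr1 val) /=; move: (ltn_ord i) (ltn_ord j).
by case: (ltnP i mu); case: (ltnP j mu) => *; apply: val_inj => /=; lia.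
Qed.

Lemma mxsub_interleave_J2mu : mxsub interleave interleave (J2mu mu) = block_J2 CC mu.
Proof.
apply/matrixP => i j; rewrite -(splitK i) -(splitK j).
case: (split i) => k; case: (split j) => l /=.
all: rewrite /block_J2 ?(block_mxEul, block_mxEur, block_mxEdl, block_mxEdr) !mxE.
all: rewrite ?(interleave_lshift, interleave_rshift) ?oddS ?odd_double //=.
  by case: eqP => // /(congr1 odd); rewrite /= !odd_double.
by rewrite eqSS (inj_eq (can_inj doubleK)) val_eqE eq_sym; case: eqP.
Qed.
End Interleave.

Theorem proposition3p06 (mu : nat) :
  (exists M N : 'M[CC]_(2 * mu),
      M *m M = 0 /\ N *m N = 0 /\ J2mu mu = M *m N - N *m M)
  <-> ~~ odd mu.
Proof.
change (sqr0_commutator (J2mu mu) <-> ~~ odd mu).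
rewrite -(sqr0_commutator_mxsub (J2mu mu) (interleave_bij mu)) mxsub_interleave_J2mu.
split=> [/sqr0_commutator_block_J2[a [b [X [Y [aa0 bb0 ab_ba bY_Yb htpy]]]]] | mu_even].
  exact: even_of_sqr0_homotopy aa0 bb0 ab_ba bY_Yb htpy.
rewrite -[mu]odd_double_half (negbTE mu_even) add0n -addnn.
exact: sqr0_commutator_block_J2_of (block_J2_sqr _ _) (block_J2_anticommute_tr _ _).
Qed.
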